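(* In the setting of the context, let $P\in\mathbb P^1$ with $\phi(P)=([1:x_1],[1:y_1])$, $x_1,y_1\in\overline{\mathbb F(t)}$, let $(i,j)=v(P)$ and $\delta=|i-j|$. (1) If $i<j<0$, then $v(\sigma^k(P))=(i-2\delta k,\,j-2\delta k)$ for all $k\ge0$. (2) If $j<i<0$, then $v(\sigma^{-k}(P))=(i-2\delta k,\,j-2\delta k)$ for all $k\ge0$.
   Context: Consider a genus-zero weighted quadrant walk model: step set $\mathcal S\subseteq\{(1,-1),(-1,1),(1,0),(0,1),(1,1)\}$ one of the five genus-zero sets (always containing $(1,-1)$ and $(-1,1)$), weights $d_{i,j}>0$ on $\mathcal S$ ($d_{i,j}=0$ off $\mathcal S$), Boltzmann weights $a,b>0$, $\mathbb F=\mathbb Q((d_{i,j}),a,b)$, and a fixed real $t$ transcendental over $\mathbb F$. $\phi:s\mapsto(x(s),y(s))$ is a fixed rational parametrization from $\mathbb P^1$ onto the closure $\overline{E_t}\subset\mathbb P^1\times\mathbb P^1$ of $\{xy(1-t\sum d_{i,j}x^iy^j)=0\}$, and $\sigma(s)=qs$ (for a fixed real $q$) satisfies $\phi(\sigma(s))=\iota_2(\iota_1(\phi(s)))$, where the involutions of $\overline{E_t}$ are given in homogeneous coordinates by $\iota_1([1:x_1],[1:y_1])=\big([1:x_1],\big[1:\tfrac{d_{-1,1}x_1^2+d_{0,1}x_1+d_{1,1}}{d_{1,-1}y_1}\big]\big)$ and $\iota_2([1:x_1],[1:y_1])=\big(\big[1:\tfrac{d_{1,-1}y_1^2+d_{1,0}y_1+d_{1,1}}{d_{-1,1}x_1}\big],[1:y_1]\big)$.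 Fix an embedding $\psi$ of $\overline{\mathbb F(t)}$ into the field of formal Puiseux series $\mathbb C^{frac}((T))$ extending $t\mapsto T$ and the inclusion $\mathbb F\subset\mathbb C$; for $u\in\overline{\mathbb F(t)}$, $v(u)\in\mathbb Q\cup\{+\infty\}$ is the $T$-valuation of $\psi(u)$. For $P\in\mathbb P^1\setminus\{0,\infty\}$ with $\phi(P)=([1:x_1],[1:y_1])$, $x_1,y_1\in\overline{\mathbb F(t)}$, its bivaluation is $v(P)=(v(x_1),v(y_1))$. *)

From HB Require Import structures.
From mathcomp Require Import all_boot all_order all_algebra all_field.
Set Implicit Arguments. Unset Strict Implicit. Unset Printing Implicit Defensive.
Import Order.TTheory GRing.Theory Num.Theory.
Local Open Scope ring_scope.

(* Points of P^1 over K in the chart used by the paper: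
   [Some x1] stands for the homogeneous point [1:x1], [None] for [0:1]. *)
Definition P1 (K : Type) := option K.

(* A (rank one, Q-valued) valuation on K: [None] = +infinity.
   This abstracts u |-> T-valuation of psi(u) for the embedding
   psi : \overline{F(t)} -> C^frac((T)). *)
Definition is_valuation (K : fieldType) (v : K -> option rat) : Prop :=
  (forall x, v x = None <-> x = 0) /\
  (forall x y a b, v x = Some a -> v y = Some b -> v (x * y) = Some (a + b)) /\
  (forall x y a b, v x = Some a -> v y = Some b -> x + y != 0 ->
     exists c, v (x + y) = Some c /\ Num.min a b <= c).

Definition iota1_y (K : fieldType) (d1m1 dm11 d01 d11 : K) (x1 y1 : K) : K :=
  (dm11 * x1 ^+ 2 + d01 * x1 + d11) / (d1m1 * y1).

Definition iota2_x (K : fieldType) (d1m1 dm11 d10 d11 : K) (x1 y1 : K) : K :=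
  (d1m1 * y1 ^+ 2 + d10 * y1 + d11) / (dm11 * x1).

From HB Require Import structures.
From mathcomp Require Import all_boot all_order all_algebra all_field.
From mathcomp Require Import lra ring.
Import Order.TTheory GRing.Theory Num.Theory.
Local Open Scope ring_scope.

Set Implicit Arguments. Unset Strict Implicit. Unset Printing Implicit Defensive.

(* If v(x) = i < 0, the numerator d_{-1,1} x^2 + d_{0,1} x + d_{1,1} of the new
   y-coordinate of iota1 is dominated by its leading term, so iota1 changes the
   bivaluation (i, j) into (i, 2i - j); symmetrically iota2 changes (i, j) with
   j < 0 into (2j - i, j).  Hence for i < j < 0 the map sigma = iota2 o iota1
   sends (i, j) to (i - 2 delta, j - 2 delta) with delta = j - i, a pair of the
   same shape with the same delta, and induction on k concludes; when j < i < 0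
   the same holds for sigma^-1 = iota1 o iota2. *)

Section Valuation.
Variables (K : fieldType) (v : K -> option rat).
Hypothesis hv : is_valuation v.

Lemma valuation_eq0 x : v x = None <-> x = 0.
Proof. exact: hv.1. Qed.

Lemma valuation_neq0 x a : v x = Some a -> x != 0.
Proof. by move=> vx; apply/eqP => /valuation_eq0; rewrite vx. Qed.

Lemma valuation_exists x : x != 0 -> exists a, v x = Some a.
Proof.
case vx: (v x) => [a|]; first by exists a.
by move/valuation_eq0: vx => ->; rewrite eqxx.
Qed.

Lemma valuationM x y a b :
  v x = Some a -> v y = Some b -> v (x * y) = Some (a + b).
Proof. exact: hv.2.1. Qed.

Lemma valuation1 : v 1 = Some 0.
Proof.
have [a va] := valuation_exists (oner_neq0 K).
have := valuationM va va; rewrite mulr1 va => -[aa].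
by congr Some; lra.
Qed.

Lemma valuationN1 : v (-1) = Some 0.
Proof.
have [a va] : exists a, v (- 1) = Some a.
  by apply: valuation_exists; rewrite oppr_eq0 oner_eq0.
have := valuationM va va; rewrite mulrNN mulr1 valuation1 => -[aa].
by rewrite va; congr Some; lra.
Qed.

Lemma valuationN x a : v x = Some a -> v (- x) = Some a.
Proof. by move=> vx; rewrite -mulN1r (valuationM valuationN1 vx) add0r. Qed.

Lemma valuationV x a : v x = Some a -> v x^-1 = Some (- a).
Proof.
move=> vx; have x0 := valuation_neq0 vx.
have [b vb] := valuation_exists (invr_neq0 x0).
have := valuationM vx vb; rewrite mulfV // valuation1 => -[ab].
by rewrite vb; congr Some; lra.
Qed.

Lemma valuationD_lt x y a b :
  v x = Some a -> v y = Some b -> a < b -> v (x + y) = Some a.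
Proof.
move=> vx vy ab.
have xy0 : x + y != 0.
  apply/negP; rewrite addr_eq0 => /eqP xE.
  by move: vx; rewrite xE (valuationN vy) => -[ba]; rewrite ba ltxx in ab.
have [c [vxy minab]] := hv.2.2 x y a b vx vy xy0.
have ac : a <= c.
  by move: minab; rewrite ge_min => /orP[// | /(lt_le_trans ab)/ltW].
rewrite vxy; congr Some; apply/eqP; rewrite eq_le ac andbT.
have x0 : x + y - y != 0 by rewrite addrK (valuation_neq0 vx).
have [c' [vx' mincb]] := hv.2.2 (x + y) (- y) c b vxy (valuationN vy) x0.
move: vx' mincb; rewrite addrK vx => -[<-]; rewrite ge_min => /orP[//|ba].
by rewrite leNgt ab in ba.
Qed.

Lemma valuation_quadratic a b c z e :
  v a = Some 0 -> (b = 0 \/ v b = Some 0) -> (c = 0 \/ v c = Some 0) ->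
  v z = Some e -> e < 0 -> v (a * z ^+ 2 + b * z + c) = Some (2 * e).
Proof.
move=> va hb hc vz e0.
have vaz2 : v (a * z ^+ 2) = Some (2 * e).
  by rewrite expr2 (valuationM va (valuationM vz vz)); congr Some; ring.
have vaz2bz : v (a * z ^+ 2 + b * z) = Some (2 * e).
  case: hb => [->|vb]; first by rewrite mul0r addr0.
  by apply: valuationD_lt vaz2 (valuationM vb vz) _; lra.
case: hc => [->|vc]; first by rewrite addr0.
by apply: valuationD_lt vaz2bz vc _; lra.
Qed.

Lemma valuation_quadratic_div a b c d z w e f :
  v a = Some 0 -> (b = 0 \/ v b = Some 0) -> (c = 0 \/ v c = Some 0) ->
  v d = Some 0 -> v z = Some e -> e < 0 -> v w = Some f ->
  v ((a * z ^+ 2 + b * z + c) / (d * w)) = Some (2 * e - f).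
Proof.
move=> va hb hc vd vz e0 vw.
have vdw := valuationV (valuationM vd vw).
by rewrite (valuationM (valuation_quadratic va hb hc vz e0) vdw) add0r.
Qed.

End Valuation.

Section QuadrantWalk.
Variables (K : fieldType) (v : K -> option rat) (d1m1 dm11 d10 d01 d11 : K).
Variables (S : Type) (phi : S -> P1 K * P1 K) (sigma sigmainv : S -> S).
Variables (iota1 iota2 : P1 K * P1 K -> P1 K * P1 K).
Hypothesis hv : is_valuation v.
Hypotheses (vd1m1 : v d1m1 = Some 0) (vdm11 : v dm11 = Some 0).
Hypotheses (hd10 : d10 = 0 \/ v d10 = Some 0) (hd01 : d01 = 0 \/ v d01 = Some 0).
Hypothesis hd11 : d11 = 0 \/ v d11 = Some 0.
Hypothesis sigmainvK : cancel sigmainv sigma.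
Hypothesis phi_sigma : forall s, phi (sigma s) = iota2 (iota1 (phi s)).
Hypothesis iota1_inv :
  forall s, iota1 (iota1 (phi s)) = phi s /\ exists s', iota1 (phi s) = phi s'.
Hypothesis iota2_inv :
  forall s, iota2 (iota2 (phi s)) = phi s /\ exists s', iota2 (phi s) = phi s'.
Hypothesis iota1E : forall s x1 y1, phi s = (Some x1, Some y1) -> y1 != 0 ->
  iota1 (phi s) = (Some x1, Some (iota1_y d1m1 dm11 d01 d11 x1 y1)).
Hypothesis iota2E : forall s x1 y1, phi s = (Some x1, Some y1) -> x1 != 0 ->
  iota2 (phi s) = (Some (iota2_x d1m1 dm11 d10 d11 x1 y1), Some y1).

Definition has_bivaluation (p : P1 K * P1 K) (i j : rat) : Prop :=
  exists x y : K, p = (Some x, Some y) /\ v x = Some i /\ v y = Some j.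

Lemma phi_sigmainv s : phi (sigmainv s) = iota1 (iota2 (phi s)).
Proof.
have [_ [s' e]] := iota1_inv (sigmainv s).
by rewrite -{2}[s]sigmainvK phi_sigma e (iota2_inv s').1 -e (iota1_inv _).1.
Qed.

Lemma iota1_bivaluation s i j : has_bivaluation (phi s) i j -> i < 0 ->
  has_bivaluation (iota1 (phi s)) i (2 * i - j).
Proof.
move=> [x [y [ps [vx vy]]]] i0.
exists x, (iota1_y d1m1 dm11 d01 d11 x y).
rewrite (iota1E ps (valuation_neq0 hv vy)); split=> //; split=> //.
exact: valuation_quadratic_div.
Qed.

Lemma iota2_bivaluation s i j : has_bivaluation (phi s) i j -> j < 0 ->
  has_bivaluation (iota2 (phi s)) (2 * j - i) j.
Proof.
move=> [x [y [ps [vx vy]]]] j0.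
exists (iota2_x d1m1 dm11 d10 d11 x y), y.
rewrite (iota2E ps (valuation_neq0 hv vx)); split=> //; split=> //.
exact: valuation_quadratic_div.
Qed.

Lemma iter_bivaluation (f : S -> S) (R : rat -> rat -> Prop) :
  (forall a b c, 0 <= c -> R a b -> R (a - c) (b - c)) ->
  (forall s a b, has_bivaluation (phi s) a b -> R a b ->
     has_bivaluation (phi (f s)) (a - 2 * `|a - b|) (b - 2 * `|a - b|)) ->
  forall s i j k, has_bivaluation (phi s) i j -> R i j ->
  has_bivaluation (phi (iter k f s))
    (i - 2 * `|i - j| * k%:R) (j - 2 * `|i - j| * k%:R).
Proof.
move=> R_shift f_step s i j k hs Rij.
elim: k => [|k IH]; first by rewrite !mulr0 !subr0.
set c := 2 * `|i - j| * k%:R.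
have c0 : 0 <= c by rewrite !mulr_ge0 ?normr_ge0 ?ler0n.
have shiftS a : a - 2 * `|i - j| * k.+1%:R = a - c - 2 * `|i - c - (j - c)|.
  have -> : i - c - (j - c) = i - j by ring.
  by rewrite /c -addn1 natrD; ring.
by rewrite iterS !shiftS; apply: f_step IH (R_shift _ _ _ c0 Rij).
Qed.

Lemma sigma_bivaluation s i j : has_bivaluation (phi s) i j -> i < j < 0 ->
  has_bivaluation (phi (sigma s)) (i - 2 * `|i - j|) (j - 2 * `|i - j|).
Proof.
move=> hs /andP[ij j0]; have [_ [s' e]] := iota1_inv s.
have h1 := iota1_bivaluation hs (lt_trans ij j0); rewrite e in h1.
have j'0 : 2 * i - j < 0 by lra.
rewrite ltr0_norm ?subr_lt0 //.
have -> : i - 2 * - (i - j) = 2 * (2 * i - j) - i by ring.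
have -> : j - 2 * - (i - j) = 2 * i - j by ring.
by rewrite phi_sigma e; apply: iota2_bivaluation.
Qed.

Lemma sigmainv_bivaluation s i j : has_bivaluation (phi s) i j -> j < i < 0 ->
  has_bivaluation (phi (sigmainv s)) (i - 2 * `|i - j|) (j - 2 * `|i - j|).
Proof.
move=> hs /andP[ji i0]; have [_ [s' e]] := iota2_inv s.
have h2 := iota2_bivaluation hs (lt_trans ji i0); rewrite e in h2.
have i'0 : 2 * j - i < 0 by lra.
rewrite gtr0_norm ?subr_gt0 //.
have -> : i - 2 * (i - j) = 2 * j - i by ring.
have -> : j - 2 * (i - j) = 2 * (2 * j - i) - j by ring.
by rewrite phi_sigmainv e; apply: iota1_bivaluation.
Qed.

End QuadrantWalk.

Theorem lemma4p5
  (K : closedFieldType) (v : K -> option rat)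
  (d1m1 dm11 d10 d01 d11 : K)
  (S : Type) (phi : S -> P1 K * P1 K) (sigma sigmainv : S -> S)
  (iota1 iota2 : P1 K * P1 K -> P1 K * P1 K) :
  is_valuation v ->
  (* weights: d_{1,-1}, d_{-1,1} nonzero constants; the others are 0 or nonzero constants *)
  d1m1 != 0 -> v d1m1 = Some 0 ->
  dm11 != 0 -> v dm11 = Some 0 ->
  (d10 = 0 \/ v d10 = Some 0) ->
  (d01 = 0 \/ v d01 = Some 0) ->
  (d11 = 0 \/ v d11 = Some 0) ->
  (* sigma is an automorphism of P^1 *)
  cancel sigma sigmainv -> cancel sigmainv sigma ->
  (* phi o sigma = iota2 o iota1 o phi *)
  (forall s, phi (sigma s) = iota2 (iota1 (phi s))) ->
  (* iota1, iota2 are involutions of the curve phi(P^1) *)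
  (forall s, iota1 (iota1 (phi s)) = phi s /\ exists s', iota1 (phi s) = phi s') ->
  (forall s, iota2 (iota2 (phi s)) = phi s /\ exists s', iota2 (phi s) = phi s') ->
  (* explicit formulas for the involutions in homogeneous coordinates *)
  (forall s x1 y1, phi s = (Some x1, Some y1) -> y1 != 0 ->
     iota1 (phi s) = (Some x1, Some (iota1_y d1m1 dm11 d01 d11 x1 y1))) ->
  (forall s x1 y1, phi s = (Some x1, Some y1) -> x1 != 0 ->
     iota2 (phi s) = (Some (iota2_x d1m1 dm11 d10 d11 x1 y1), Some y1)) ->
  forall (P : S) (x1 y1 : K) (i j : rat),
    phi P = (Some x1, Some y1) -> v x1 = Some i -> v y1 = Some j ->
    (i < j < 0 -> forall k : nat, exists x y : K,
        phi (iter k sigma P) = (Some x, Some y) /\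
        v x = Some (i - 2 * `|i - j| * k%:R) /\
        v y = Some (j - 2 * `|i - j| * k%:R)) /\
    (j < i < 0 -> forall k : nat, exists x y : K,
        phi (iter k sigmainv P) = (Some x, Some y) /\
        v x = Some (i - 2 * `|i - j| * k%:R) /\
        v y = Some (j - 2 * `|i - j| * k%:R)).
Proof.
move=> hv _ vd1m1 _ vdm11 hd10 hd01 hd11 _ sigmainvK phi_sigma iota1_inv iota2_inv
  iota1E iota2E P x1 y1 i j hP vx1 vy1.
have hP' : has_bivaluation v (phi P) i j by exists x1, y1.
split=> Rij k.
- apply: (iter_bivaluation (R := fun a b => a < b < 0)) hP' Rij.
    by move=> a b c c0 /andP[ab b0]; apply/andP; split; lra.
  exact: (sigma_bivaluation hv vd1m1 vdm11 hd10 hd01 hd11 phi_sigma iota1_inv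
            iota1E iota2E).
- apply: (iter_bivaluation (R := fun a b => b < a < 0)) hP' Rij.
    by move=> a b c c0 /andP[ba a0]; apply/andP; split; lra.
  exact: (sigmainv_bivaluation hv vd1m1 vdm11 hd10 hd01 hd11 sigmainvK phi_sigma
            iota1_inv iota2_inv iota1E iota2E).
Qed.
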